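(* Let $m$ and $n$ be positive integers with $m$ odd. Then there exists a $\Delta$-permutation $\psi$ of the group $\mathbb{Z}_m\times\mathbb{Z}_{2n}$ such that (1) $\Delta=[(0,0)]\cup[\gamma \mid \gamma\in\mathbb{Z}_m\times\mathbb{Z}_{2n},\ \gamma\neq(0,n)]$ (that is, $\Delta$ contains $(0,0)$ twice and every other element of $\mathbb{Z}_m\times\mathbb{Z}_{2n}$ except $(0,n)$ exactly once), and (2) $\psi$ fixes $(0,0)$ and $\left(-\frac{m-1}{2},\ \left\lfloor\frac{n+1}{2}\right\rfloor+\frac{m-1}{2}n\right)$.
   Context: A list is a multiset; a $v$-list of a group is a multiset of $v$ (not necessarily distinct) elements of the group. Given a group $\Gamma$ (written additively) of order $v$ and a $v$-list $\Delta$ of $\Gamma$, a permutation $\varphi$ of $\Gamma$ is a $\Delta$-permutation if the multiset $[\varphi(a)-a \mid a\in\Gamma]$ equals $\Delta$. *)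

From HB Require Import structures.
From mathcomp Require Import all_boot all_order fingroup perm all_algebra.
Set Implicit Arguments. Unset Strict Implicit. Unset Printing Implicit Defensive.
Import GRing.Theory.
Local Open Scope ring_scope.

(* A v-list of a finite additive group G is represented by a sequence
   (multisets compared with perm_eq). *)
Definition is_Delta_perm (G : finZmodType) (D : seq G) (phi : {perm G}) : Prop :=
  perm_eq [seq phi a - a | a <- enum G] D.

(* Z_m, realized as 'I_m.-1.+1 (equal to 'I_m when 0 < m), with its Z/mZ
   additive structure (addition mod m). *)
Notation Zmod m := 'I_(m.-1.+1).

Definition Zmn (m n : nat) : Type := (Zmod m * Zmod (2 * n))%type.
HB.instance Definition _ (m n : nat) :=
  Finite.copy (Zmn m n) (Zmod m * Zmod (2 * n))%type.
HB.instance Definition _ (m n : nat) :=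
  GRing.Zmodule.copy (Zmn m n) (Zmod m * Zmod (2 * n))%type.

Check fun m n => is_Delta_perm (G := Zmn m n).

From HB Require Import structures.
From mathcomp Require Import all_boot all_order fingroup perm all_algebra.
From mathcomp Require Import zify.
Import GRing.Theory.
Set Implicit Arguments. Unset Strict Implicit. Unset Printing Implicit Defensive.

(* Number Z_m x Z_2n by X in [0, 2N), N = mn, through X |-> (+-floor(X/n), X);
   as m is odd this is a bijection.  Let S be whichever of N, N + 1 is even,
   and let mirror fix 0 and reverse each of the intervals (0, S) and [S, 2N).
   Then X + mirror X is S or S + 2N - 1, so the parity of the second
   coordinate of coord (mirror X) - coord X tells which interval X lies in;
   within an interval, this difference determines X modulo n, then
   floor(X/n) modulo m, hence X modulo N and so X itself.  Thus the 2N - 1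
   differences at X <> 0 are distinct, and the same computation shows that
   none of them is (0, n) = coord N - coord 0.  Finally (N + 1)/2 is fixed
   by the mirror and coord sends it to the prescribed point. *)

Lemma odd_eq_mod2n a b n : a = b %[mod 2 * n] -> odd a = odd b.
Proof.
have dvd2 : 2 %| 2 * n by rewrite dvdn_mulr.
move=> eq_ab; rewrite -[odd a]oddb -[odd b]oddb -!modn2.
by rewrite -(modn_dvdm a dvd2) -(modn_dvdm b dvd2) eq_ab.
Qed.

Lemma eq_mod_half a b d : 2 * a = 2 * b %[mod 2 * d] -> a = b %[mod d].
Proof. by rewrite -!muln_modr => /eqP; rewrite eqn_pmul2l // => /eqP. Qed.

Lemma eq_mod_half_odd a b m : odd m -> 2 * a = 2 * b %[mod m] -> a = b %[mod m].
Proof.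
move=> odd_m eq_ab; apply: eq_mod_half; rewrite [2 * m]mulnC; apply/eqP.
by rewrite chinese_remainder ?coprimen2 // eq_ab !modnMr !eqxx.
Qed.

Lemma eq_mod_mul_div x y m n :
  x = y %[mod n] -> x %/ n = y %/ n %[mod m] -> x = y %[mod m * n].
Proof.
move=> eq_r eq_q; rewrite (divn_eq (x %% (m * n)) n) (divn_eq (y %% (m * n)) n).
by rewrite -!modn_divl eq_q !modn_dvdm ?dvdn_mull // eq_r.
Qed.

Lemma eq_mod_window d lo a b :
  a = b %[mod d] -> lo <= a < lo + d -> lo <= b < lo + d -> a = b.
Proof.
move=> eq_ab /andP[lo_a a_lt] /andP[lo_b b_lt].
have /eqP : lo + (a - lo) = lo + (b - lo) %[mod d] by rewrite !subnKC.
by rewrite eqn_modDl !modn_small ?ltn_subLR // => /eqP; lia.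
Qed.

Lemma eq_mod_double_cross a b x y d :
  a + x = b + y -> a + y = b + x %[mod d] -> 2 * x = 2 * y %[mod d].
Proof.
move=> sum_eq cross; apply/eqP; rewrite -(eqn_modDl b); apply/eqP.
have -> : b + 2 * x = b + x + x by lia.
have -> : b + 2 * y = a + y + x by lia.
by rewrite -modnDml -cross modnDml.
Qed.

Lemma addn_divn_eq a b x y n : 0 < n ->
  a + x = b + y -> a = b %[mod n] -> x = y %[mod n] -> a %/ n + x %/ n = b %/ n + y %/ n.
Proof.
move=> n_gt0 sum_eq eq_a eq_x; apply/eqP; rewrite -(eqn_add2r (n <= a %% n + x %% n)).
by rewrite -divnD // sum_eq divnD // eq_a eq_x.
Qed.

Lemma eq_mod_of_cross a b x y m n : odd m -> 0 < n -> a + x = b + y ->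
  a + y = b + x %[mod 2 * n] -> a %/ n + y %/ n = b %/ n + x %/ n %[mod m] ->
  x = y %[mod m * n].
Proof.
move=> odd_m n_gt0 sum_eq cross_r cross_q.
have eq_x : x = y %[mod n] by apply: eq_mod_half; exact: eq_mod_double_cross cross_r.
have eq_a : a = b %[mod n].
  by apply/eqP; rewrite -(eqn_modDr x) sum_eq -(modnDmr b y) -eq_x modnDmr.
have quot_eq := addn_divn_eq n_gt0 sum_eq eq_a eq_x.
have eq_q : x %/ n = y %/ n %[mod m].
  by apply: eq_mod_half_odd odd_m _; exact: eq_mod_double_cross quot_eq cross_q.
exact: eq_mod_mul_div.
Qed.

Definition mirror (N X : nat) : nat :=
  if X == 0 then 0
  else if X < N + odd N then N + odd N - X else N + odd N + 2 * N - 1 - X.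

Lemma mirror_lt N X : X < 2 * N -> mirror N X < 2 * N.
Proof. by rewrite /mirror; case: (odd N) => /=; repeat case: ifP; lia. Qed.

Lemma mirrorK N X : X < 2 * N -> mirror N (mirror N X) = X.
Proof. by rewrite /mirror; case: (odd N) => /=; repeat case: ifP; lia. Qed.

Lemma mirror_mid N : 0 < N -> mirror N (N.+1 %/ 2) = N.+1 %/ 2.
Proof.
move=> N_gt0; have := divn_eq N.+1 2; rewrite modn2 /= /mirror.
by case: (odd N) => /=; repeat case: ifP; lia.
Qed.

Lemma mirror_addn N X : 0 < X < 2 * N -> mirror N X + X =
  if X < N + odd N then N + odd N else N + odd N + 2 * N - 1.
Proof. by rewrite /mirror; case: (odd N) => /=; repeat case: ifP; lia. Qed.

Lemma odd_mirror_addn N X : 0 < X < 2 * N -> odd (mirror N X + X) = (N + odd N <= X).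
Proof.
move=> X_bd; rewrite mirror_addn //.
have even_S : odd (N + odd N) = false by rewrite oddD oddb addbb.
case: (ltnP X (N + odd N)) => side /=; first by rewrite even_S.
have -> : N + odd N + 2 * N - 1 = (N + odd N + 2 * N.-1).+1 by lia.
by rewrite /= oddD oddM even_S.
Qed.

Definition mirror_ord N (X : 'I_(2 * N)) : 'I_(2 * N) := Ordinal (mirror_lt (ltn_ord X)).

Lemma mirror_ordK N : involutive (@mirror_ord N).
Proof. by move=> X; apply: val_inj; rewrite /= mirrorK. Qed.

Definition mirror_perm N : {perm 'I_(2 * N)} := perm (inv_inj (@mirror_ordK N)).

Lemma mirror_permE N X : mirror_perm N X = mirror N X :> nat.
Proof. by rewrite permE. Qed.

Lemma perm_eq_enum_predC1 (T : finType) (z : T) (s : seq T) :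
  uniq s -> z \notin s -> size s = #|T|.-1 -> perm_eq s [seq x <- enum T | x != z].
Proof.
move=> s_uniq z_notin s_size.
have sub : {subset s <= [seq x <- enum T | x != z]}.
  by move=> x x_in; rewrite mem_filter mem_enum andbT; apply: contraNneq z_notin => <-.
have size_le : size [seq x <- enum T | x != z] <= size s.
  rewrite s_size size_filter cardT -(count_predC (pred1 z)) count_uniq_mem ?enum_uniq //.
  by rewrite mem_enum; exact: leqnn.
have [_ eq_s] := uniq_min_size s_uniq sub size_le.
by apply: uniq_perm => //; apply: filter_uniq; apply: enum_uniq.
Qed.

Lemma exists_perm_conj (T G : finType) (f : {perm T}) (phi : T -> G) :
  bijective phi -> exists psi : {perm G}, forall X, psi (phi X) = phi (f X).
Proof.
case=> phi' phiK phi'K.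
have psi_inj : injective (phi \o f \o phi').
  by apply: inj_comp (inj_comp (can_inj phiK) (@perm_inj _ f)) (can_inj phi'K).
by exists (perm psi_inj) => X; rewrite permE /= phiK.
Qed.

Local Open Scope ring_scope.

Lemma perm_diffs_conj (T : finType) (G : finZmodType) (f : T -> T) (phi : T -> G)
    (psi : {perm G}) :
  bijective phi -> (forall X, psi (phi X) = phi (f X)) ->
  perm_eq [seq psi a - a | a <- enum G] [seq phi (f X) - phi X | X <- enum T].
Proof.
move=> phi_bij psiE.
have enum_phi : perm_eq (enum G) [seq phi X | X <- enum T].
  apply: uniq_perm; first exact: enum_uniq.
    by rewrite map_inj_uniq ?enum_uniq //; exact: bij_inj.
  by move=> a; case: phi_bij => phi' _ phi'K; rewrite mem_enum -(phi'K a) map_f ?mem_enum.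
apply: perm_trans (perm_map _ enum_phi) _; rewrite -map_comp.
by rewrite (eq_map (g := fun X => phi (f X) - phi X)) // => X /=; rewrite psiE.
Qed.

Lemma inZp_sub_eq p a b c d :
  inZp a - inZp b = inZp c - inZp d :> 'I_p.+1 -> (a + d = c + b %[mod p.+1])%N.
Proof.
move=> eq_sub; have : inZp a + inZp d = inZp c + inZp b :> 'I_p.+1.
  by rewrite -(subrK (inZp b) (inZp a)) eq_sub addrAC subrK.
by move/(congr1 val) => /=; rewrite !modnDm.
Qed.

(* The sign only serves to make coord map the mirror's fixed point (mn + 1)/2
   to the prescribed point; for n = 1 that already holds without it. *)
Definition coord (m n X : nat) : Zmn m n :=
  ((if (1 < n)%N then - inZp (X %/ n) else inZp (X %/ n)), inZp X).

Lemma coord0 m n : coord m n 0 = 0.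
Proof.
have inZp0 p : inZp 0 = 0 :> 'I_p.+1 by apply: val_inj; rewrite /= mod0n.
by rewrite /coord div0n !inZp0 oppr0; case: ifP.
Qed.

Lemma coord_sub_eq m n a b c d : (0 < m)%N -> (0 < n)%N ->
  coord m n a - coord m n b = coord m n c - coord m n d ->
  (a + d = c + b %[mod 2 * n] /\ a %/ n + d %/ n = c %/ n + b %/ n %[mod m])%N.
Proof.
move=> m_gt0 n_gt0 eq_sub; split.
  by move/(congr1 snd)/inZp_sub_eq: eq_sub; rewrite prednK ?muln_gt0.
move/(congr1 fst): eq_sub => /=; case: ifP => _; last by move/inZp_sub_eq; rewrite prednK.
by rewrite -!opprD => /oppr_inj/inZp_sub_eq; rewrite prednK.
Qed.

Lemma coord_inj m n X Y : odd m -> (0 < n)%N ->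
  (X < 2 * (m * n))%N -> (Y < 2 * (m * n))%N -> coord m n X = coord m n Y -> X = Y.
Proof.
move=> odd_m n_gt0 X_lt Y_lt eq_XY.
have := coord_sub_eq (odd_gt0 odd_m) n_gt0 (congr1 (+%R^~ (- coord m n 0)) eq_XY).
rewrite !addn0 div0n !addn0 => -[eq_r eq_q].
have eq_rn : (X = Y %[mod n])%N.
  by rewrite -(modn_dvdm X (dvdn_mull 2 (dvdnn n))) eq_r modn_dvdm ?dvdn_mull.
have eq_q2 : (X %/ n = Y %/ n %[mod 2])%N by rewrite !modn_divl eq_r.
have eq_q2m : (X %/ n = Y %/ n %[mod m * 2])%N.
  by apply/eqP; rewrite chinese_remainder ?coprimen2 // eq_q eq_q2 !eqxx.
by apply: (eq_mod_window (lo := 0)) (eq_mod_mul_div eq_rn eq_q2m) _ _; lia.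
Qed.

Lemma coord_mn m n : odd m -> (0 < n)%N -> coord m n (m * n) = (0, inZp n).
Proof.
move=> odd_m n_gt0; rewrite /coord mulnK //.
have -> : inZp m = 0 :> Zmod m by apply: val_inj; rewrite /= prednK ?odd_gt0 // modnn.
have -> : inZp (m * n) = inZp n :> Zmod (2 * n).
  apply: val_inj => /=; rewrite prednK ?muln_gt0 // {1}(divn_eq m 2) modn2 odd_m.
  by rewrite mulnDl mul1n -mulnA modnMDl.
by rewrite oppr0; case: ifP.
Qed.

Lemma coord_mid m n : odd m -> (0 < n)%N ->
  coord m n ((m * n).+1 %/ 2) =
  (- inZp ((m - 1) %/ 2), inZp ((n + 1) %/ 2 + (m - 1) %/ 2 * n)).
Proof.
move=> odd_m n_gt0; set k := ((m - 1) %/ 2)%N.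
have m_eq : m = (k * 2).+1 by rewrite /k; have := divn_eq m 2; rewrite modn2 odd_m; lia.
rewrite /coord; case: ltnP => [n_gt1 | n_le1].
  have mid_eq : ((m * n).+1 %/ 2 = k * n + (n + 1) %/ 2)%N by rewrite m_eq; lia.
  by rewrite mid_eq divnMDl // divn_small ?addn0 ?(addnC (k * n)) //; lia.
have n1 : n = 1%N by lia.
have mid_eq : ((m * n).+1 %/ 2 = k.+1)%N by rewrite n1 m_eq; lia.
subst n; rewrite mid_eq divn1; congr pair; last by congr inZp; lia.
apply/eqP; rewrite -addr_eq0; apply/eqP/val_inj => /=.
rewrite prednK ?odd_gt0 // modnDm.
have -> : (k.+1 + k = m)%N by lia.
by rewrite modnn.
Qed.

Lemma mirror_diff_inj m n X Y : odd m -> (0 < n)%N ->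
  (0 < X < 2 * (m * n))%N -> (0 < Y < 2 * (m * n))%N ->
  coord m n (mirror (m * n) X) - coord m n X =
    coord m n (mirror (m * n) Y) - coord m n Y ->
  X = Y.
Proof.
move=> odd_m n_gt0 X_bd Y_bd /(coord_sub_eq (odd_gt0 odd_m) n_gt0) [cross_r cross_q].
set N := (m * n)%N in X_bd Y_bd cross_r cross_q.
have same_side : (N + odd N <= X)%N = (N + odd N <= Y)%N.
  rewrite -!odd_mirror_addn //; move: (odd_eq_mod2n cross_r); rewrite !oddD.
  by case: (odd (mirror N X)) (odd (mirror N Y)) (odd X) (odd Y) => [] [] [] [].
have sum_eq : (mirror N X + X = mirror N Y + Y)%N.
  by rewrite !mirror_addn // !ltnNge same_side.
have eq_N := eq_mod_of_cross odd_m n_gt0 sum_eq cross_r cross_q.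
have S_bd : (N <= N + odd N <= N.+1)%N by case: (odd N) => /=; lia.
case: (leqP (N + odd N) X) same_side => side_X side_Y.
  by apply: (eq_mod_window (lo := N)) eq_N _ _; clear -X_bd Y_bd S_bd side_X side_Y; lia.
by apply: (eq_mod_window (lo := 1%N)) eq_N _ _; clear -X_bd Y_bd S_bd side_X side_Y; lia.
Qed.

Lemma mirror_diff_neq m n X : odd m -> (0 < n)%N -> (0 < X < 2 * (m * n))%N ->
  coord m n (mirror (m * n) X) - coord m n X != (0, inZp n).
Proof.
move=> odd_m n_gt0 X_bd.
rewrite -(coord_mn odd_m n_gt0) -(subr0 (coord m n (m * n))) -(coord0 m n).
apply/eqP => /(coord_sub_eq (odd_gt0 odd_m) n_gt0).
rewrite addn0 div0n addn0 mulnK // => -[cross_r cross_q].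
set N := (m * n)%N in X_bd cross_r cross_q.
have side : (N + odd N <= X)%N = odd N.
  by rewrite -odd_mirror_addn // oddD (odd_eq_mod2n cross_r) oddD addbK.
have [K sum_eq X_in] : exists2 K, (mirror N X + X = N + K + K)%N & (K < X < K + N)%N.
  move: side; rewrite mirror_addn //.
  case: (ltnP X (N + odd N)) => side_X /esym odd_N; rewrite odd_N /= in side_X *.
    by exists 0%N; clear -X_bd side_X; lia.
  by exists N; clear -X_bd side_X; lia.
have cross_r' : (mirror N X + K = N + K + X %[mod 2 * n])%N.
  by rewrite -modnDml cross_r modnDml addnAC.
have cross_q' : (mirror N X %/ n + K %/ n = (N + K) %/ n + X %/ n %[mod m])%N.
  by rewrite divnDl ?dvdn_mull // /N mulnK // -modnDml cross_q modnDml addnAC.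
suff X_K : X = K by move: X_in; rewrite X_K ltnn.
apply: (eq_mod_window (lo := K)) (eq_mod_of_cross odd_m n_gt0 sum_eq cross_r' cross_q') _ _;
  by clear -X_in; lia.
Qed.

Lemma card_Zmn m n : (0 < m)%N -> (0 < n)%N -> #|{: Zmn m n}| = (2 * (m * n))%N.
Proof. by move=> m_gt0 n_gt0; rewrite card_prod !card_ord !prednK ?muln_gt0 // mulnCA. Qed.

Lemma perm_mirror_diffs m n : odd m -> (0 < n)%N ->
  perm_eq [seq coord m n (mirror (m * n) X) - coord m n X | X <- iota 0 (2 * (m * n))]
    ((0 : Zmn m n) :: [seq g <- enum (Zmn m n : finType) | g != (0, inZp n)]).
Proof.
move=> odd_m n_gt0.
have N2_gt0 : (0 < 2 * (m * n))%N by rewrite !muln_gt0 n_gt0 (odd_gt0 odd_m).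
rewrite -(prednK N2_gt0) /= subrr perm_cons.
apply: perm_eq_enum_predC1.
- rewrite map_inj_in_uniq ?iota_uniq // => X Y; rewrite !mem_iota => X_bd Y_bd.
  by apply: mirror_diff_inj => //; lia.
- apply/mapP => -[X]; rewrite mem_iota => X_bd /esym; apply/eqP.
  by apply: mirror_diff_neq => //; lia.
- by rewrite size_map size_iota card_Zmn ?(odd_gt0 odd_m).
Qed.

Unset Implicit Arguments.

Theorem mainTheorem2 (m n : nat) :
  (0 < m)%N -> odd m -> (0 < n)%N ->
  exists psi : {perm Zmn m n},
    is_Delta_perm
      ((0 : Zmn m n) :: [seq g <- enum (Zmn m n : finType) | g != ((0 : Zmod m), (inZp n : Zmod (2 * n)))])
      psi
    /\ psi 0 = 0
    /\ (let c : Zmn m n :=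
          (- (inZp ((m - 1) %/ 2) : Zmod m),
           (inZp ((n + 1) %/ 2 + (m - 1) %/ 2 * n) : Zmod (2 * n))) in
        psi c = c).
Proof.
move=> m_gt0 odd_m n_gt0.
pose phi (X : 'I_(2 * (m * n))) := coord m n X.
have phi_bij : bijective phi.
  apply: inj_card_bij => [X Y /coord_inj eq_XY | ]; last by rewrite card_Zmn ?card_ord.
  by apply: val_inj; apply: eq_XY.
have [psi psiE] := exists_perm_conj (mirror_perm (m * n)) phi_bij.
have psi_coord X (X_lt : (X < 2 * (m * n))%N) :
    psi (coord m n X) = coord m n (mirror (m * n) X).
  by have := psiE (Ordinal X_lt); rewrite /phi mirror_permE.
exists psi; split; last split.
- apply: perm_trans (perm_diffs_conj phi_bij psiE) _.
  rewrite (eq_map (g := (fun X => coord m n (mirror (m * n) X) - coord m n X) \o val)).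
    by rewrite map_comp val_enum_ord perm_mirror_diffs.
  by move=> X; rewrite /= /phi mirror_permE.
- have /= := psi_coord 0%N; rewrite coord0; apply.
  by rewrite !muln_gt0 m_gt0 n_gt0.
- by rewrite /= -coord_mid // psi_coord ?mirror_mid ?muln_gt0 ?m_gt0 //; lia.
Qed.
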